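(* Let $f\in\mathbb{Q}[x]$ be a non-zero squarefree polynomial of degree $n$ and let $g\in\mathbb{Q}[x]$ satisfy $g(\xi)>0$ at every real root $\xi$ of $f$. Then there exist polynomials $h_1,\dots,h_n\in\mathbb{Q}[x]$ of degree $<n$ and positive weights $\omega_1,\dots,\omega_n\in\mathbb{Q}_{>0}$ such that $h:=\sum_{i=1}^n\omega_ih_i^2$ satisfies $h\equiv g\pmod f$. *)

From HB Require Import structures.
From mathcomp Require Import all_boot all_order all_algebra.
From mathcomp Require Import reals.
Set Implicit Arguments. Unset Strict Implicit. Unset Printing Implicit Defensive.
Import Order.TTheory GRing.Theory Num.Theory.
Local Open Scope ring_scope.

Definition squarefree_poly (F : fieldType) (p : {poly F}) : Prop :=
  forall d : {poly F}, (1 < size d)%N -> ~~ (d * d %| p).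

From HB Require Import structures.
From mathcomp Require Import all_boot all_order all_algebra.
From mathcomp Require Import reals.
From mathcomp Require Import all_field ring lra.
From mathcomp.real_closed Require Import polyrcf complex.
Set Implicit Arguments. Unset Strict Implicit. Unset Printing Implicit Defensive.
Import Order.TTheory GRing.Theory Num.Theory.
Local Open Scope ring_scope.

(* Since [f] is separable, [R[x]/(f)] is a product of copies of [R] and [C], so
   [g - d T] is a square [H^2] modulo [f] once it is positive at the real roots of [f];
   here [T = sum_(k < n) x^(2k)] and [d] is a small positive rational. Approximating
   the coefficients of [H mod f] by rationals gives [h] with
   [g = h^2 + d T + r (mod f)] where [r] has tiny coefficients, and [d T + r] is
   explicitly a positive combination of the [n] squares [1] and
   [(x^k + r_k / 2d)^2], [0 < k < n]. In the [n]-dimensional space [Q[x]/(f)] the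
   resulting [n + 1] squares are cut down to [n] by Caratheodory's theorem for cones. *)

Lemma squarefree_separable (K : numFieldType) (p : {poly K}) :
  p != 0 -> squarefree_poly p -> separable_poly p.
Proof.
move=> p0 sqf; apply/separable_polyP; split=> [u v uvp | u _ su].
  apply: contraT => ncop.
  have u0 : u != 0 by apply: contraNneq p0 => u0; rewrite -dvd0p -(mul0r v) -u0.
  have gcd_gt1 : (1 < size (gcdp u v))%N.
    by rewrite ltn_neqAle eq_sym ncop lt0n size_poly_eq0 gcdp_eq0 negb_and u0.
  by have := sqf _ gcd_gt1; rewrite (dvdp_trans _ uvp) // dvdp_mul ?dvdp_gcdl ?dvdp_gcdr.
(* The top coefficient of [u^`()] is [lead_coef u *+ (size u).-1], nonzero in characteristic 0. *)
apply/eqP => du0; have /eqP := congr1 (fun q : {poly K} => q`_(size u).-2) du0.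
have sz : (size u).-2.+1 = (size u).-1 by case: (size u) su => [|[|k]].
rewrite coef_deriv coef0 sz -lead_coefE mulrn_eq0 lead_coef_eq0 -size_poly_eq0.
by case: (size u) su => [|[|k]].
Qed.

Lemma dvdp_sub_modp (K : fieldType) (d p : {poly K}) : d %| p - p %% d.
Proof. by rewrite {1}(divp_eq p d) addrK dvdp_mull. Qed.

Lemma modp_eq_dvdp (K : fieldType) (d p q : {poly K}) : d %| p - q -> p %% d = q %% d.
Proof. by move/modp_eq0/eqP; rewrite modpD modpN subr_eq0 => /eqP. Qed.

Lemma dvdp_sqr_sub_modp (K : fieldType) (F G H : {poly K}) :
  F %| H ^+ 2 - G -> F %| (H %% F) ^+ 2 - G.
Proof.
move=> dvdH; have -> : (H %% F) ^+ 2 - G = (H ^+ 2 - G) - (H - H %% F) * (H + H %% F).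
  by ring.
by rewrite dvdp_sub // dvdp_mulr // dvdp_sub_modp.
Qed.

Lemma modp_sumZ (K : fieldType) (f : {poly K}) (I : Type) (r : seq I) (P : pred I)
    (c : I -> K) (p : I -> {poly K}) :
  (\sum_(i <- r | P i) c i *: p i) %% f = \sum_(i <- r | P i) c i *: (p i %% f).
Proof.
rewrite (big_morph (fun q => q %% f) (modpD f) (mod0p f)).
by apply: eq_bigr => i _; rewrite modpZl.
Qed.

Definition sqr_modp (K : fieldType) (A G : {poly K}) := exists H, A %| H ^+ 2 - G.

Lemma sqr_modpM (K : fieldType) (A B G : {poly K}) : coprimep A B ->
  sqr_modp A G -> sqr_modp B G -> sqr_modp (A * B) G.
Proof.
move=> /[dup] coAB /Bezout_eq1_coprimepP [[u v] /= uv1] [H1 dA] [H2 dB].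
(* Chinese remainders: with [u A + v B = 1] the witness is [H1] mod [A] and [H2] mod [B]. *)
exists (H1 * (v * B) + H2 * (u * A)); rewrite Gauss_dvdp //; apply/andP; split.
  have -> : (H1 * (v * B) + H2 * (u * A)) ^+ 2 - G =
    (H1 ^+ 2 - G) + A * (u * (H2 - H1) * (2%:R * H1 + A * (u * (H2 - H1)))).
    have -> : v * B = 1 - u * A by rewrite -uv1; ring.
    ring.
  by rewrite dvdp_add // dvdp_mulr.
have -> : (H1 * (v * B) + H2 * (u * A)) ^+ 2 - G =
  (H2 ^+ 2 - G) + B * (v * (H1 - H2) * (2%:R * H2 + B * (v * (H1 - H2)))).
  have -> : u * A = 1 - v * B by rewrite -uv1; ring.
  ring.
by rewrite dvdp_add // dvdp_mulr.
Qed.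

Lemma sqr_modp_size1 (K : fieldType) (A G : {poly K}) :
  size A = 1%N -> sqr_modp A G.
Proof. by move=> /eqP; rewrite size_poly_eq1 => /dvdUp A1; exists 0. Qed.

Section RealClosedSqrtMod.
Variable R : rcfType.
Local Notation toC := (real_complex R).

Lemma sqr_modp_XsubC (a : R) (G : {poly R}) :
  0 <= G.[a] -> sqr_modp ('X - a%:P) G.
Proof.
by move=> Ga0; exists (Num.sqrt G.[a])%:P; rewrite dvdp_XsubCl rootE !hornerE sqr_sqrtr // subrr.
Qed.

Definition conj_quadratic (x y : R) : {poly R} :=
  'X^2 - (2%:R * x) *: 'X + (x ^+ 2 + y ^+ 2)%:P.

Lemma map_conj_quadratic x y : map_poly toC (conj_quadratic x y) =
  ('X - (x +i* y)%C%:P) * ('X - (x -i* y)%C%:P).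
Proof.
have -> : forall a c : R[i], ('X - a%:P) * ('X - c%:P) = 'X^2 - (a + c) *: 'X + (a * c)%:P.
  by move=> a c; rewrite -mul_polyC polyCD polyCM; ring.
rewrite rmorphD rmorphB /= map_polyXn map_polyZ map_polyX map_polyC /=.
by congr (_ - _ *: _ + _%:P); rewrite /= /real_complex_def; simpc; congr Complex; ring.
Qed.

Lemma size_conj_quadratic x y : size (conj_quadratic x y) = 3%N.
Proof.
by rewrite -(size_map_poly toC) map_conj_quadratic size_mul ?polyXsubC_eq0 // !size_XsubC.
Qed.

Lemma conj_quadratic_dvdp x y (P : {poly R}) : y != 0 ->
  root (map_poly toC P) (x +i* y)%C -> conj_quadratic x y %| P.
Proof.
move=> y0 rootP; rewrite -(dvdp_map toC) map_conj_quadratic Gauss_dvdp; last first.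
  rewrite coprimep_XsubC2 //= /real_complex_def; simpc; rewrite eq_complex /= negb_and.
  by rewrite eqxx /= -opprD oppr_eq0 -mulr2n mulrn_eq0 negb_or y0.
rewrite !dvdp_XsubCl rootP /=.
have conj_map : map_poly conjc (map_poly toC P) = map_poly toC P.
  by rewrite -map_poly_comp; apply: eq_map_poly => c /=; exact: conjc_real.
by rewrite -[(x -i* y)%C]/((x +i* y)^*)%C -complex_root_conj conj_map.
Qed.

(* The real line [(d/y) X + c - (d/y) x] takes the value [c + id] at [x + iy]. *)
Lemma sqr_modp_conj_quadratic x y (G : {poly R}) : y != 0 ->
  sqr_modp (conj_quadratic x y) G.
Proof.
move=> y0; have [c [d sqrtG]] : exists c d,
    sqrtc (map_poly toC G).[(x +i* y)%C] = (c +i* d)%C.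
  by case: (sqrtc _) => c d; exists c, d.
pose v := d / y; exists (v *: 'X + (c - v * x)%:P).
have lineE : (map_poly toC (v *: 'X + (c - v * x)%:P)).[(x +i* y)%C] = (c +i* d)%C.
  rewrite rmorphD /= map_polyZ map_polyX map_polyC /= hornerD hornerZ hornerX hornerC.
  by rewrite /= /real_complex_def; simpc; congr Complex; rewrite /v; field; exact: y0.
apply: conj_quadratic_dvdp y0 _.
by rewrite rootE rmorphB rmorphXn /= hornerD hornerN horner_exp lineE -sqrtG sqr_sqrtc subrr.
Qed.

Lemma separable_sqr_modp (F G : {poly R}) : F != 0 -> separable_poly F ->
  (forall x, root F x -> 0 < G.[x]) -> sqr_modp F G.
Proof.
move: {2}(size F) (leqnn (size F)) => n; elim: n F => [|n IH] F sF F0 sepF posG.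
  by move: sF; rewrite leqn0 size_poly_eq0 (negPf F0).
have [sF1|sF1] := leqP (size F) 1.
  by apply: sqr_modp_size1; apply/eqP; rewrite eqn_leq sF1 lt0n size_poly_eq0.
have factor Q F1 : F = F1 * Q -> sqr_modp Q G -> (1 < size Q)%N -> sqr_modp F G.
  move=> eF sqrQ sQ; have Q0 : Q != 0 by rewrite -size_poly_gt0 (ltn_trans _ sQ).
  have F10 : F1 != 0 by apply: contraNneq F0 => F10; rewrite eF F10 mul0r.
  move: sepF; rewrite eF separable_mul => /and3P [sepF1 _ coF1Q].
  apply: sqr_modpM => //; apply: IH => // [|x rx].
    move: sF; rewrite eF size_mul //; case: (size Q) sQ => [|[|k]] // _.
    by rewrite !addnS ltnS => /(leq_trans (leq_addr _ _)).
  by apply: posG; rewrite eF rootM rx.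
case Er : (rootsR F) => [|a s].
  have Fc1 : size (map_poly toC F) != 1%N by rewrite size_map_poly gtn_eqF.
  have [[x y] rootxy] := closed_rootP _ Fc1.
  have y0 : y != 0.
    apply: contraTneq rootxy => ->; rewrite -[(x +i* 0)%C]/(toC x) fmorph_root.
    by have := roots_on_rootsR F0 x; rewrite Er in_nil in_itv /= => ->.
  have /dvdpP [F1 eF] := conj_quadratic_dvdp y0 rootxy.
  by apply: (factor _ _ eF (sqr_modp_conj_quadratic _ _ y0)); rewrite size_conj_quadratic.
have ra : root F a by have := roots_on_rootsR F0 a; rewrite Er mem_head.
move: (ra); rewrite -dvdp_XsubCl => /dvdpP [F1 eF].
by apply: (factor _ _ eF (sqr_modp_XsubC (ltW (posG a ra)))); rewrite size_XsubC.
Qed.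

End RealClosedSqrtMod.

Lemma ratr_approx (R : archiRealFieldType) (a e : R) :
  0 < e -> exists q : rat, `|a - ratr q| < e.
Proof.
move=> e0; have [q] : exists q : rat, ratr q \in `]a - e, a + e[.
  by apply: rat_in_itvoo; lra.
by rewrite in_itv /= => /andP[lo hi]; exists q; rewrite ltr_norml; apply/andP; split; lra.
Qed.

Lemma exists_pos_rat_lt (R : archiRealFieldType) (s : seq R) :
  {in s, forall x, 0 < x} -> exists2 q : rat, 0 < q & {in s, forall x, ratr q < x}.
Proof.
elim: s => [_|a s IH pos_as]; first by exists 1.
have [q q0 qlt] := IH (fun x xs => pos_as x (mem_behead (xs : x \in behead (a :: s)))).
have a0 : 0 < a := pos_as a (mem_head a s).
have [q'] : exists q' : rat, ratr q' \in `]0, Num.min a (ratr q)[.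
  by apply: rat_in_itvoo; rewrite lt_min a0 ltr0q.
rewrite in_itv /= lt_min => /and3P[q'0 q'a q'q]; exists q'; first by rewrite -(ltr0q R).
by move=> x; rewrite in_cons => /orP[/eqP -> // | xs]; rewrite (lt_trans q'q) ?qlt.
Qed.

Lemma exists_rat_lt_at_roots (R : realType) (F G T : {poly R}) : F != 0 ->
  (forall x, root F x -> 0 < G.[x]) ->
  exists2 d : rat, 0 < d & forall x, root F x -> ratr d * T.[x] < G.[x].
Proof.
move=> F0 posG.
have rootsRE x : (x \in rootsR F) = root F x by rewrite -(roots_on_rootsR F0) in_itv.
have Tpos x : 0 < `|T.[x]| + 1 by rewrite ltr_wpDl.
have ratios_pos : {in [seq G.[x] / (`|T.[x]| + 1) | x <- rootsR F], forall y, 0 < y}.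
  by move=> _ /mapP[x xr ->]; rewrite divr_gt0 // posG // -rootsRE.
have [d d0 dlt] := exists_pos_rat_lt ratios_pos.
exists d => // x rx; have xr : x \in rootsR F by rewrite rootsRE.
have := dlt _ (map_f _ xr); rewrite ltr_pdivlMr //; apply: le_lt_trans.
rewrite mulrDr mulr1 (le_trans (ler_norm _)) // normrM gtr0_norm ?ltr0q //.
by rewrite lerDl ler0q ltW.
Qed.

Section CoefBounds.
Variable K : numFieldType.
Implicit Types F P Q H D : {poly K}.

Definition mulmodp_bound F Q n k := \sum_(i < n) `|(('X^i * Q) %% F)`_k|.

Lemma norm_coef_mulmodp_le F P Q n e k : (size P <= n)%N ->
  (forall i, `|P`_i| <= e) -> `|((P * Q) %% F)`_k| <= e * mulmodp_bound F Q n k.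
Proof.
move=> sP Pe; rewrite -(take_poly_id sP) /take_poly poly_def mulr_suml.
rewrite (big_morph _ (modpD F) (mod0p F)) coef_sum mulr_sumr.
apply: le_trans (ler_norm_sum _ _ _) _; apply: ler_sum => i _.
by rewrite -scalerAl modpZl coefZ normrM; apply: ler_wpM2r.
Qed.

Definition sqr_diff_bound F H n k :=
  mulmodp_bound F (2%:R * H) n k + \sum_(i < n) mulmodp_bound F 'X^i n k.

Lemma sqr_diff_bound_ge0 F H n k : 0 <= sqr_diff_bound F H n k.
Proof.
by apply: addr_ge0; apply: sumr_ge0 => i _ //; apply: sumr_ge0.
Qed.

(* [D * (2 H - D) = H ^ 2 - (H - D) ^ 2] *)
Lemma norm_coef_sqr_diff_le F H D n e k : (size D <= n)%N -> 0 <= e <= 1 ->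
  (forall i, `|D`_i| <= e) ->
  `|((D * (2%:R * H - D)) %% F)`_k| <= e * sqr_diff_bound F H n k.
Proof.
move=> sD /andP[e0 e1] De; rewrite mulrBr modpD modpN coefB mulrDr.
apply: le_trans (ler_normB _ _) _; apply: lerD; first exact: norm_coef_mulmodp_le.
apply: le_trans (norm_coef_mulmodp_le _ _ _ sD De) _; rewrite ler_wpM2l //.
apply: ler_sum => i _; rewrite mulrC.
apply: le_trans (norm_coef_mulmodp_le _ _ _ sD De) _.
by rewrite ler_piMl // sumr_ge0.
Qed.

End CoefBounds.

Lemma rat_approx_sqrt_modp (R : archiRealFieldType) (f g : {poly rat}) (H : {poly R})
    (e : rat) : f != 0 -> 0 < e -> map_poly ratr f %| H ^+ 2 - map_poly ratr g ->
  exists2 h : {poly rat}, (size h <= (size f).-1)%N &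
    forall k, `|((g - h ^+ 2) %% f)`_k| <= e.
Proof.
move=> f0 e0 dvdH; set n := (size f).-1; pose F := map_poly (ratr : rat -> R) f.
have sF : size F = n.+1 by rewrite size_map_poly prednK // size_poly_gt0.
have size_modF (p : {poly R}) : (size (p %% F)%R <= n)%N.
  by rewrite -ltnS -sF ltn_modpN0 // -size_poly_gt0 sF.
pose H0 := H %% F; have dvdH0 := dvdp_sqr_sub_modp dvdH.
pose C := 1 + \sum_(k < n) sqr_diff_bound F H0 n k.
have C0 : 0 < C by rewrite ltr_wpDr // sumr_ge0 // => k _; exact: sqr_diff_bound_ge0.
pose eps := Num.min 1 (ratr e / C).
have eps0 : 0 < eps by rewrite lt_min ltr01 divr_gt0 // ltr0q.
pose q i := xchoose (ratr_approx (H0`_i) eps0).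
pose h := \poly_(i < n) q i; exists h; first exact: size_poly.
pose D := H0 - map_poly ratr h.
have sD : (size D <= n)%N.
  by rewrite (leq_trans (size_polyD _ _)) // geq_max size_modF size_polyN size_map_poly size_poly.
have De i : `|D`_i| <= eps.
  rewrite coefB coef_map coef_poly /=; case: ltnP => [_|ni].
    exact: ltW (xchooseP (ratr_approx (H0`_i) eps0)).
  by rewrite nth_default ?(leq_trans (size_modF _)) // rmorph0 subr0 normr0 ltW.
have modE : map_poly ratr ((g - h ^+ 2) %% f) = (D * (2%:R * H0 - D)) %% F.
  rewrite map_modp rmorphB rmorphXn /=; apply: modp_eq_dvdp.
  have -> : map_poly ratr g - map_poly ratr h ^+ 2 - D * (2%:R * H0 - D) =
    - (H0 ^+ 2 - map_poly ratr g) by rewrite /D; ring.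
  by rewrite dvdpNr.
move=> k; rewrite -(ler_rat R) ratr_norm -coef_map modE.
have [kn|nk] := ltnP k n; last first.
  by rewrite nth_default ?normr0 ?ler0q ?ltW // (leq_trans (size_modF _)).
have bound_le_C : sqr_diff_bound F H0 n k <= C.
  rewrite /C (bigD1 (Ordinal kn)) //= addrCA lerDl addr_ge0 // sumr_ge0 // => i _.
  exact: sqr_diff_bound_ge0.
apply: le_trans (norm_coef_sqr_diff_le _ _ _ sD _ De) _; first by rewrite (ltW eps0) /eps ge_min lexx.
apply: le_trans (_ : eps * C <= _); first by rewrite ler_pM2l.
by rewrite -ler_pdivlMr // /eps ge_min lexx orbT.
Qed.

Lemma sum_sqr_small_coefs_lt (K : realFieldType) m (d : K) (r : {poly K}) : 0 < d ->
  (forall k, `|r`_k| <= d / (2%:R * m.+1%:R)) ->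
  \sum_(j < m) (r`_j.+1 / d / 2%:R) ^+ 2 < 1 + r`_0 / d.
Proof.
move=> d0 small; set N : K := m.+1%:R; set s := 1 / (2%:R * N).
have N1 : 1 <= N by rewrite ler1n.
have sN : s * N = 1 / 2%:R by rewrite /s; field; rewrite -mulrS pnatr_eq0.
have s0 : 0 <= s by rewrite divr_ge0 // mulr_ge0 // (le_trans ler01).
have s_le : s <= 1 / 2%:R by nra.
have u_le k : `|r`_k / d| <= s.
  rewrite normrM normfV (gtr0_norm d0) ler_pdivrMr // /s mul1r mulrC; exact: small.
have sqr_le j : (r`_j.+1 / d / 2%:R) ^+ 2 <= s / 8%:R.
  by have := u_le j.+1; rewrite ler_norml => /andP[lo hi]; nra.
have sum_le : \sum_(j < m) (r`_j.+1 / d / 2%:R) ^+ 2 <= 1 / 16%:R.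
  apply: (@le_trans _ _ (\sum_(j < m) s / 8%:R)); first by apply: ler_sum => j _.
  rewrite sumr_const card_ord -mulr_natr.
  have mN : m%:R <= N by rewrite ler_nat.
  nra.
by have := u_le 0%N; rewrite ler_norml => /andP[lo hi]; lra.
Qed.

(* The decomposition is [d T + r = d w0 + sum_(0 < k < n) d (x^k + r_k / 2d)^2],
   where [w0 = 1 + r_0 / d - sum_(0 < k < n) (r_k / 2d)^2]. *)
Lemma sos_add_small (K : realFieldType) m (d : K) (r : {poly K}) : 0 < d ->
  (size r <= m.+1)%N -> (forall k, `|r`_k| <= d / (2%:R * m.+1%:R)) ->
  exists (p : 'I_m.+1 -> {poly K}) (w : 'I_m.+1 -> K),
    [/\ forall i, (size (p i) <= m.+1)%N, forall i, 0 < w i &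
        \sum_i w i *: p i ^+ 2 = d *: \sum_(k < m.+1) 'X^k ^+ 2 + r].
Proof.
move=> d0 sr small; pose a (j : nat) := r`_j.+1 / d / 2%:R.
pose w0 := 1 + r`_0 / d - \sum_(j < m) a j ^+ 2.
have w0_pos : 0 < w0 by rewrite subr_gt0 sum_sqr_small_coefs_lt.
exists (fun i : 'I_m.+1 => if unlift ord0 i is Some j then 'X^(j.+1) + (a j)%:P else 1).
exists (fun i : 'I_m.+1 => if unlift ord0 i is Some j then d else d * w0).
split.
- move=> i; case: unliftP => [j _|_]; last by rewrite size_poly1.
  rewrite (leq_trans (size_polyD _ _)) // geq_max size_polyXn ltnS ltn_ord.
  by rewrite (leq_trans (size_polyC_leq1 _)).
- by move=> i; case: unliftP => [j _|_]; rewrite ?mulr_gt0.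
have rE : r = \sum_(k < m.+1) r`_k *: 'X^k.
  by rewrite -{1}(take_poly_id sr) /take_poly poly_def.
have termE (j : 'I_m) : d *: ('X^(j.+1) + (a j)%:P) ^+ 2 =
    d *: 'X^(j.+1) ^+ 2 + r`_j.+1 *: 'X^(j.+1) + (d * a j ^+ 2)%:P.
  have ra : r`_j.+1 = 2%:R * d * a j by rewrite /a; field; rewrite gt_eqF.
  by rewrite ra -!mul_polyC !polyCM rmorph_nat; ring.
rewrite [in RHS]rE !big_ord_recl /= unlift_none /bump /=.
under eq_bigr do rewrite liftK /= termE.
rewrite !big_split /= -rmorph_sum -scaler_sumr -mulr_sumr.
have -> : d * w0 = d + r`_0 - d * \sum_(j < m) a j ^+ 2.
  by rewrite /w0; field; rewrite gt_eqF.
rewrite expr1n expr0 -!mul_polyC !polyCB polyCD; ring.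
Qed.

Lemma poly_lin_dep (K : fieldType) n (v : 'I_n.+1 -> {poly K}) :
  (forall i, (size (v i) <= n)%N) ->
  exists2 mu : 'I_n.+1 -> K, exists i, mu i != 0 & \sum_i mu i *: v i = 0.
Proof.
move=> sv; pose M : 'M[K]_(n.+1, n) := \matrix_i poly_rV (v i).
have : kermx M != 0.
  by rewrite -mxrank_eq0 mxrank_ker subn_eq0 -ltnNge ltnS rank_leq_col.
case/rowV0Pn => u /sub_kermxP uM u0; exists (u 0); last first.
  transitivity (rVpoly (u *m M)); last by rewrite uM linear0.
  rewrite mulmx_sum_row linear_sum; apply: eq_bigr => i _.
  by rewrite linearZ rowK /= poly_rV_K.
apply/existsP; apply: contraNT u0 => /existsPn u0.
by apply/eqP/rowP => i; rewrite mxE; apply/eqP; rewrite -[_ == _]negbK u0.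
Qed.

(* Shift along a null combination with a positive coefficient until the first weight vanishes. *)
Lemma conic_caratheodory (K : realFieldType) n (v : 'I_n.+1 -> {poly K})
    (lam : 'I_n.+1 -> K) :
  (forall i, (size (v i) <= n)%N) -> (forall i, 0 < lam i) ->
  exists j (lam' : 'I_n.+1 -> K), [/\ forall i, 0 <= lam' i, lam' j = 0 &
    \sum_i lam' i *: v i = \sum_i lam i *: v i].
Proof.
move=> sv lam_pos; have [mu0 [i0 mu0i0] mu0v] := poly_lin_dep sv.
have [mu [i1 mui1] muv] : exists2 mu : 'I_n.+1 -> K, exists i, 0 < mu i &
    \sum_i mu i *: v i = 0.
  have [mu0i0_neg|mu0i0_pos] := ltP (mu0 i0) 0.
    exists (fun i => - mu0 i); first by exists i0; rewrite oppr_gt0.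
    by under eq_bigr do rewrite scaleNr; rewrite sumrN mu0v oppr0.
  by exists mu0 => //; exists i0; rewrite lt_neqAle eq_sym mu0i0.
case: (arg_minP (fun i => lam i / mu i) (mui1 : [pred i | 0 < mu i] i1)) => j muj jmin.
pose t := lam j / mu j; exists j, (fun i => lam i - t * mu i); split.
- move=> i; rewrite subr_ge0; have [mui_pos|mui_le0] := ltP 0 (mu i).
    by rewrite -ler_pdivlMr // jmin.
  by rewrite (le_trans _ (ltW (lam_pos i))) // mulr_ge0_le0 // divr_ge0 // ltW.
- by rewrite /t divfK ?subrr // gt_eqF.
under eq_bigr do rewrite scalerBl -scalerA.
by rewrite sumrB -scaler_sumr muv scaler0 subr0.
Qed.

Lemma sos_modp_reduce (K : realFieldType) (f g : {poly K}) n
    (p : 'I_n.+1 -> {poly K}) (w : 'I_n.+1 -> K) :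
  size f = n.+1 -> (forall i, (size (p i) <= n)%N) -> (forall i, 0 < w i) ->
  f %| \sum_i w i *: p i ^+ 2 - g ->
  exists (h : 'I_n -> {poly K}) (w' : 'I_n -> K),
    (forall i, (size (h i) <= n)%N) /\ (forall i, 0 < w' i) /\
    f %| \sum_i (w' i)%:P * h i ^+ 2 - g.
Proof.
move=> sf sp w_pos dvd_g.
have f0 : f != 0 by rewrite -size_poly_gt0 sf.
have smod i : (size (p i ^+ 2 %% f)%R <= n)%N by rewrite -ltnS -sf ltn_modpN0.
have [j [w' [w'_ge0 w'j w'E]]] := conic_caratheodory smod w_pos.
pose keep i := w' (lift j i) != 0.
exists (fun i => if keep i then p (lift j i) else 0).
exists (fun i => if keep i then w' (lift j i) else 1).
split; first by move=> i; case: keep; rewrite ?size_poly0.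
split; first by move=> i; rewrite /keep; case: eqP => /= [_|/eqP w'0]; rewrite ?ltr01 // lt_def w'0 w'_ge0.
have -> : \sum_i (if keep i then w' (lift j i) else 1)%:P *
    (if keep i then p (lift j i) else 0) ^+ 2 = \sum_i w' i *: p i ^+ 2.
  rewrite (bigD1_ord j) //= w'j scale0r add0r; apply: eq_bigr => i _.
  by rewrite /keep; case: eqP => [->|_]; rewrite ?scale0r ?expr0n ?mulr0 // mul_polyC.
rewrite -(subrK (\sum_i w i *: p i ^+ 2) (\sum_i w' i *: p i ^+ 2)) -addrA dvdp_add //.
by apply/modp_eq0P; rewrite modpD modpN !modp_sumZ w'E subrr.
Qed.

Theorem mainTheorem6 (R : realType) (f g : {poly rat}) :
  f != 0 ->
  squarefree_poly f ->
  (forall xi : R, root (map_poly ratr f) xi -> 0 < (map_poly ratr g).[xi]) ->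
  exists (h : 'I_(size f).-1 -> {poly rat}) (w : 'I_(size f).-1 -> rat),
    (forall i, size (h i) <= (size f).-1)%N /\
    (forall i, 0 < w i) /\
    f %| (\sum_(i < (size f).-1) (w i)%:P * (h i) ^+ 2) - g.
Proof.
move=> f0 sqf pos; case sf : (size f) => [|[|m]] /=.
- by move/eqP: sf; rewrite size_poly_eq0 (negPf f0).
- exists (fun _ => 0), (fun _ => 1); do 2!split=> [[]//|].
  by rewrite dvdUp // -size_poly_eq1 sf.
pose T : {poly rat} := \sum_(k < m.+1) 'X^k ^+ 2.
have F0 : map_poly (ratr : rat -> R) f != 0 by rewrite map_poly_eq0.
have [d d0 dT] := exists_rat_lt_at_roots (map_poly ratr T) F0 pos.
pose g' := g - d *: T.
have [H dvdH] : sqr_modp (map_poly (ratr : rat -> R) f) (map_poly ratr g').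
  apply: separable_sqr_modp; rewrite ?separable_map ?squarefree_separable //.
  by move=> x rx; rewrite rmorphB /= map_polyZ hornerD hornerN hornerZ subr_gt0 dT.
have e0 : 0 < d / (2%:R * m.+1%:R) by rewrite divr_gt0 // mulr_gt0 // ltr0n.
have [h sh hsmall] := rat_approx_sqrt_modp f0 e0 dvdH; rewrite sf in sh.
pose r := (g' - h ^+ 2) %% f.
have sr : (size r <= m.+1)%N by rewrite -ltnS -sf ltn_modpN0.
have [p [w [sp w_pos pwE]]] := sos_add_small d0 sr hsmall.
apply: (@sos_modp_reduce _ _ _ _ (fun i => if unlift ord0 i is Some j then p j else h)
  (fun i => if unlift ord0 i is Some j then w j else 1)) => // [i|i|].
- by case: unliftP.
- by case: unliftP.
rewrite big_ord_recl unlift_none scale1r.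
under eq_bigr do rewrite liftK /=.
rewrite pwE; have := dvdp_sub_modp f (g' - h ^+ 2); rewrite -dvdpNr; congr (_ %| _).
by rewrite /r /g'; ring.
Qed.
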